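(* Let $V$ be a real vector space and $X\subseteq V$. If $X$ contains convexly independent subsets of arbitrarily large finite size, then $X$ contains an infinite convexly independent subset.
   Context: A subset $Y\subseteq V$ is convexly independent if $y\notin\mathrm{conv}(Y\setminus\{y\})$ for every $y\in Y$, where $\mathrm{conv}$ denotes the convex hull. *)

From HB Require Import structures.
From mathcomp Require Import all_boot all_order all_algebra.
From mathcomp Require Import boolp classical_sets cardinality reals.
Set Implicit Arguments. Unset Strict Implicit. Unset Printing Implicit Defensive.
Import Order.TTheory GRing.Theory Num.Theory.
Local Open Scope classical_set_scope.
Local Open Scope ring_scope.

Definition conv (R : realType) (V : lmodType R) (Y : set V) : set V :=
  [set v | exists (n : nat) (w : 'I_n -> R) (p : 'I_n -> V),
      [/\ forall i, 0 <= w i, \sum_(i < n) w i = 1,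
          forall i, Y (p i) & v = \sum_(i < n) w i *: p i]].

Definition conv_indep (R : realType) (V : lmodType R) (Y : set V) : Prop :=
  forall y, Y y -> ~ conv (Y `\ y) y.

(* Choose greedily a sequence p_0, p_1, ... in X with no three points collinear:
   a line meets a convexly independent set in at most two points, so a large
   enough convexly independent subset of X has a point off all lines through two
   of the points already chosen.  Call p_k fresh if it is not an affine
   combination of p_0, ..., p_(k-1).  Fresh points are affinely independent, so
   infinitely many of them already form the required set.  Otherwise every p_k
   has affine coordinates with respect to the finitely many fresh points.
   Colouring each triple by the signs of its coordinate differences and of its
   2x2 minors, infinite Ramsey gives an infinite set H and two coordinates in
   which p(H) becomes a planar chain with increasing abscissae and every triple
   positively oriented.  Each point of such a chain has a supporting line
   leaving the other points strictly above it; pulled back to V, these affine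
   functions show that p(H) is convexly independent. *)

From HB Require Import structures.
From mathcomp Require Import all_boot all_order all_algebra.
From mathcomp Require Import boolp classical_sets cardinality reals.
From mathcomp Require Import ring lra.
Set Implicit Arguments. Unset Strict Implicit. Unset Printing Implicit Defensive.
Import Order.TTheory GRing.Theory Num.Theory.
Local Open Scope classical_set_scope.

Lemma infinite_nat_unbounded (A : set nat) :
  infinite_set A -> forall n, exists2 m, (n <= m)%N & A m.
Proof.
move=> Ainf n; apply: contrapT => nA; apply/Ainf/(sub_finite_set _ (finite_II n)).
by move=> m Am /=; rewrite ltnNge; apply/negP => nm; apply: nA; exists m.
Qed.

Lemma finite_nat_bounded (A : set nat) :
  finite_set A -> exists N, forall k, A k -> (k < N)%N.
Proof.
move=> Afin; exists (\max_(x <- finmap.enum_fset (fset_set A)) x).+1 => k Ak.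
by rewrite ltnS leq_bigmax_seq // in_fset_set ?inE.
Qed.

Lemma exists_next_in (A : set nat) j : infinite_set A ->
  exists2 k, A k /\ (j < k)%N & forall q, A q -> (j < q)%N -> (k <= q)%N.
Proof.
move=> Ainf; have [m jm Am] := infinite_nat_unbounded Ainf j.+1.
have ex : exists k, `[< A k /\ (j < k)%N >] by exists m; apply/asboolP.
case: (ex_minnP ex) => k /asboolP kP k_min; exists k => // q Aq jq.
by apply: k_min; apply/asboolP.
Qed.

Lemma exists_prev_in (A : set nat) i j : A i -> (i < j)%N ->
  exists2 i0, A i0 /\ (i0 < j)%N & forall q, A q -> (q < j)%N -> (q <= i0)%N.
Proof.
move=> Ai ij; have ex : exists i, `[< A i /\ (i < j)%N >] by exists i; apply/asboolP.
have bnd q : `[< A q /\ (q < j)%N >] -> (q <= j)%N by move=> /asboolP[_ /ltnW].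
case: (ex_maxnP ex bnd) => i0 /asboolP i0P i0_max; exists i0 => // q Aq qj.
by apply: i0_max; apply/asboolP.
Qed.

Lemma infinite_image_inj (U T : Type) (A : set U) (f : U -> T) :
  injective f -> infinite_set A -> infinite_set (f @` A).
Proof.
by move=> finj; rewrite (eq_finite_set (@inj_card_eq _ _ A f (fun x y _ _ => finj x y))).
Qed.

Lemma infinite_fiber (U : Type) (T : finType) (A : set U) (f : U -> T) :
  infinite_set A -> exists c, infinite_set (A `&` f @^-1` [set c]).
Proof.
move=> Ainf; apply: contrapT => nfib; apply: Ainf.
apply: (@sub_finite_set _ _ (\bigcup_(c in [set: T]) (A `&` f @^-1` [set c]))).
  by move=> x Ax; exists (f x).
apply: bigcup_finite; first exact: finite_finset.
by move=> c _; apply: contrapT => cinf; apply: nfib; exists c.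
Qed.

Section RamseyDiagonal.
Variables (T : finType) (P : nat -> set nat -> T -> Prop).
Hypothesis P_sub : forall a A B c, B `<=` A -> P a A c -> P a B c.
Hypothesis P_shrink : forall a A, infinite_set A ->
  exists A' c, [/\ A' `<=` A, infinite_set A' & P a A' c].

Let diagonal_step (A : set nat) (g : nat * set nat * T) :=
  [/\ A g.1.1, g.1.2 `<=` A `&` [set x | (g.1.1 < x)%N], infinite_set g.1.2
    & P g.1.1 g.1.2 g.2].

Let diagonal_step_exists A : infinite_set A -> exists g, diagonal_step A g.
Proof.
move=> Ainf; have [a Aa] := infinite_setN0 Ainf.
have [|A' [c [A'sub A'inf PA']]] := P_shrink a (A := A `&` [set x | (a < x)%N]).
  apply: infinite_setIl => //; apply: (sub_finite_set _ (finite_II a.+1)).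
  by move=> x /= /negP; rewrite -leqNgt ltnS.
by exists (a, A', c).
Qed.

Lemma ramsey_diagonal A0 : infinite_set A0 ->
  exists B c, [/\ B `<=` A0, infinite_set B &
    forall i, B i -> P i [set x | B x /\ (i < x)%N] c].
Proof.
move=> A0inf; have [[[a0 A1] c0] _] := diagonal_step_exists A0inf.
have /choice[G GP] : forall A, exists g, infinite_set A -> diagonal_step A g.
  move=> A; have [/diagonal_step_exists[g Ng]|Afin] := pselect (infinite_set A).
    by exists g.
  by exists (a0, A1, c0) => /Afin.
(* A_(n+1) is an infinite part of A_n above a_n on which a_n has a single
   colour; B keeps the a_n of the colour that occurs infinitely often. *)
pose As n := iter n (fun A => (G A).1.2) A0.
have Asinf n : infinite_set (As n).
  by elim: n => [|n IH] //=; have [] := GP _ IH.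
pose a n := (G (As n)).1.1.
have Asa n : As n (a n) by have [] := GP _ (Asinf n).
have AsS n : As n.+1 `<=` As n `&` [set x | (a n < x)%N] by have [] := GP _ (Asinf n).
have As_decr m n : (m <= n)%N -> As n `<=` As m.
  move=> /subnKC <-; elim: (n - m)%N => [|k IH]; first by rewrite addn0.
  by rewrite addnS => x /AsS[/IH].
have a_mono : {mono a : m n / (m <= n)%N}.
  by apply: Order.NatMonotonyTheory.incnP => n; have [] := AsS n _ (Asa n.+1).
have [c fiber_inf] := infinite_fiber (fun n => (G (As n)).2) infinite_nat.
exists (a @` (setT `&` (fun n => (G (As n)).2) @^-1` [set c])), c; split.
- by move=> _ [n _ <-]; apply: (As_decr 0%N n).
- exact: infinite_image_inj (incn_inj a_mono) fiber_inf.
- move=> _ [m [_ cm] <-]; have [_ _ _] := GP _ (Asinf m); rewrite -cm.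
  apply: P_sub => _ [[n [_ _] <-]] /=; rewrite ltnNge a_mono -ltnNge => mn.
  exact: As_decr mn _ (Asa n).
Qed.

End RamseyDiagonal.

Lemma ramsey_pairs (T : finType) (A0 : set nat) (f : nat -> nat -> T) :
  infinite_set A0 -> exists B c, [/\ B `<=` A0, infinite_set B &
     forall i j, B i -> B j -> (i < j)%N -> f i j = c].
Proof.
pose P a (A : set nat) c := forall x, A x -> f a x = c.
have P_sub a A B c : B `<=` A -> P a A c -> P a B c by move=> BA fA x /BA/fA.
have P_shrink a A : infinite_set A ->
    exists A' c, [/\ A' `<=` A, infinite_set A' & P a A' c].
  move=> Ainf; have [c fc] := infinite_fiber (f a) Ainf.
  by exists (A `&` f a @^-1` [set c]), c; split => // x [].
move=> A0inf; have [B [c [BA0 Binf Bc]]] := ramsey_diagonal P_sub P_shrink A0inf.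
by exists B, c; split => // i j Bi Bj ij; exact: Bc i Bi j (conj Bj ij).
Qed.

Lemma ramsey_triples (T : finType) (f : nat -> nat -> nat -> T) :
  exists B c, infinite_set B /\
     forall i j k, B i -> B j -> B k -> (i < j < k)%N -> f i j k = c.
Proof.
pose P a (A : set nat) c := forall x y, A x -> A y -> (x < y)%N -> f a x y = c.
have P_sub a A B c : B `<=` A -> P a A c -> P a B c.
  by move=> BA fA x y /BA Ax /BA Ay; apply: fA.
have P_shrink a A : infinite_set A ->
    exists A' c, [/\ A' `<=` A, infinite_set A' & P a A' c].
  by move=> Ainf; have [A' [c [A'A A'inf fc]]] := ramsey_pairs (f a) Ainf; exists A', c.
have [B [c [_ Binf Bc]]] := ramsey_diagonal P_sub P_shrink infinite_nat.
exists B, c; split => // i j k Bi Bj Bk /andP[ij jk].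
exact: Bc i Bi j k (conj Bj ij) (conj Bk (ltn_trans ij jk)) jk.
Qed.

Lemma greedy_sequence (T : Type) (P : seq T -> T -> Prop) :
  (forall s, exists x, P s x) ->
  exists p : nat -> T, forall n, P [seq p i | i <- iota 0 n] (p n).
Proof.
move=> /choice[next nextP].
pose pre := fix pre n := if n is n'.+1 then rcons (pre n') (next (pre n')) else [::].
exists (fun n => next (pre n)) => n /=.
suff -> : [seq next (pre i) | i <- iota 0 n] = pre n by apply: nextP.
by elim: n => [|n IH] //; rewrite -addn1 iotaD map_cat IH cats1 addn1.
Qed.

Local Open Scope ring_scope.

Section Collinear.
Variables (R : realType) (V : lmodType R).

Definition on_line (a b x : V) := exists t : R, x = a + t *: (b - a).

Lemma line_pointE (a b : V) (t s : R) : a != b ->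
  (a + t *: (b - a) == a + s *: (b - a)) = (t == s).
Proof.
move=> ab; rewrite (inj_eq (addrI a)) -subr_eq0 -scalerBl scaler_eq0.
by rewrite !subr_eq0 [b == a]eq_sym (negbTE ab) orbF.
Qed.

Lemma conv_segment (Y : set V) (x z : V) (t : R) : 0 <= t <= 1 -> Y x -> Y z ->
  conv Y (t *: x + (1 - t) *: z).
Proof.
move=> /andP[t0 t1] Yx Yz.
exists 2%N, (fun i : 'I_2 => if val i == 0%N then t else 1 - t),
  (fun i : 'I_2 => if val i == 0%N then x else z); split.
- by move=> i; case: ifP => _ //; rewrite subr_ge0.
- by rewrite big_ord_recl big_ord1 /= addrC subrK.
- by move=> i; case: ifP.
- by rewrite big_ord_recl big_ord1.
Qed.

Lemma conv_between (Y : set V) (a b : V) (t1 t2 t3 : R) : t1 < t2 < t3 ->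
  Y (a + t1 *: (b - a)) -> Y (a + t3 *: (b - a)) -> conv Y (a + t2 *: (b - a)).
Proof.
move=> /andP[lt12 lt23] Y1 Y3; set t := (t3 - t2) / (t3 - t1).
have t31 : 0 < t3 - t1 by rewrite subr_gt0 (lt_trans lt12).
have t01 : 0 <= t <= 1.
  by rewrite /t divr_ge0 ?ler_pdivrMr //=; lra.
suff -> : a + t2 *: (b - a) = t *: (a + t1 *: (b - a)) + (1 - t) *: (a + t3 *: (b - a)).
  exact: conv_segment.
move: (b - a) => d; rewrite !scalerDr !scalerA addrACA -!scalerDl.
rewrite [t + _]addrC subrK scale1r; congr (_ + _ *: _).
by rewrite /t; field; rewrite lt0r_neq0.
Qed.

Lemma conv_indep_on_line (Y : set V) (a b x y z : V) : conv_indep Y ->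
  Y x -> Y y -> Y z -> x != y -> y != z -> x != z ->
  on_line a b x -> on_line a b y -> on_line a b z -> False.
Proof.
move=> Yind Yx Yy Yz xy yz xz [t1 ex] [t2 ey] [t3 ez].
have ab : a != b by apply: contraNneq xy => ba; rewrite ex ey -ba subrr !scaler0.
have middle tu tv tw : tu < tv -> tv < tw ->
    Y (a + tu *: (b - a)) -> Y (a + tw *: (b - a)) -> ~ Y (a + tv *: (b - a)).
  move=> lt_uv lt_vw Yu Yw Yv; apply: (Yind _ Yv).
  have Yv' t : Y (a + t *: (b - a)) -> t != tv ->
      (Y `\ (a + tv *: (b - a))) (a + t *: (b - a)).
    by move=> Yt tv'; split=> //= /eqP; rewrite line_pointE // (negbTE tv').
  apply: (conv_between (t1 := tu) (t3 := tw)); first by rewrite lt_uv.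
  - by apply: Yv'; rewrite // lt_eqF.
  - by apply: Yv'; rewrite // gt_eqF.
have [t12 t23 t13] : [/\ t1 != t2, t2 != t3 & t1 != t3].
  by rewrite -!(line_pointE _ _ ab) -ex -ey -ez.
rewrite {}ex {}ey {}ez in Yx Yy Yz.
move: t12 t23 t13; rewrite !neq_lt => /orP[?|?] /orP[?|?] /orP[?|?];
  (try by exfalso; lra);
  first [ exact: (middle t1 t2 t3) | exact: (middle t3 t2 t1)
        | exact: (middle t2 t1 t3) | exact: (middle t3 t1 t2)
        | exact: (middle t1 t3 t2) | exact: (middle t2 t3 t1) ].
Qed.

Lemma count_on_line_le2 (S : seq V) (a b : V) : uniq S -> conv_indep [set` S] ->
  (count (fun x => `[< on_line a b x >]) S <= 2)%N.
Proof.
move=> Suniq Sind; rewrite leqNgt -size_filter; set L := filter _ S.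
apply/negP => size3.
have Luniq : uniq L by rewrite filter_uniq.
have L_on_line i : (i < size L)%N -> nth 0 L i \in S /\ on_line a b (nth 0 L i).
  by move=> iL; move: (mem_nth 0 iL); rewrite mem_filter => /andP[/asboolP].
have [xS xl] := L_on_line 0%N (ltnW (ltnW size3)).
have [yS yl] := L_on_line 1%N (ltnW size3).
have [zS zl] := L_on_line 2%N size3.
apply: (conv_indep_on_line Sind xS yS zS _ _ _ xl yl zl);
  by rewrite nth_uniq // (leq_trans _ size3).
Qed.

Lemma exists_point_off_lines (X : set V) (C : seq V) :
  (exists S : seq V, [/\ uniq S, (size C + size C * (size C * 2) < size S)%N,
     [set` S] `<=` X & conv_indep [set` S]]) ->
  exists x, [/\ X x, x \notin C & forall a b, a \in C -> b \in C -> ~ on_line a b x].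
Proof.
move=> [S [Suniq sizeS SX Sind]]; apply: contrapT => noX.
pose online a b x : bool := `[< on_line a b x >].
have sum_count (P : pred V) : (\sum_(x <- S) P x)%N = count P S.
  by rewrite -sum1_count [RHS]big_mkcond.
have sum_const (k : nat) : (\sum_(a <- C) k)%N = (size C * k)%N.
  by rewrite big_const_seq count_predT iter_addn_0 mulnC.
have covered x : x \in S -> (0 < (x \in C) + \sum_(a <- C) \sum_(b <- C) online a b x)%N.
  move=> xS; case: (boolP (x \in C)) => // xC.
  have [a [b [aC bC abx]]] : exists a b, [/\ a \in C, b \in C & on_line a b x].
    apply: contrapT => h; apply: noX; exists x; split => //; first exact: SX.
    by move=> a b aC bC abx; apply: h; exists a, b.
  rewrite add0n (big_rem _ aC) (big_rem _ bC) /=.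
  by have -> : online a b x by apply/asboolP.
move: sizeS; rewrite ltnNge => /negP; apply.
rewrite -sum1_size (@leq_trans (\sum_(x <- S) ((x \in C) +
    \sum_(a <- C) \sum_(b <- C) online a b x))%N) //.
  by rewrite big_seq [X in (_ <= X)%N]big_seq; apply: leq_sum => x /covered.
rewrite big_split /= exchange_big /= leq_add //.
  rewrite sum_count -size_filter uniq_leq_size ?filter_uniq // => x.
  by rewrite mem_filter => /andP[].
rewrite -sum_const leq_sum // => a _; rewrite exchange_big /= -sum_const leq_sum // => b _.
by rewrite sum_count count_on_line_le2.
Qed.

Lemma general_position_seq (X : set V) :
  (forall n, exists S : seq V,
      [/\ uniq S, (n <= size S)%N, [set` S] `<=` X & conv_indep [set` S]]) ->
  exists p : nat -> V, [/\ forall n, X (p n), injective p &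
    forall i j k, (i < j < k)%N -> ~ on_line (p i) (p j) (p k)].
Proof.
move=> large.
have [p pP] := greedy_sequence (fun C : seq V =>
  exists_point_off_lines (large (size C + size C * (size C * 2)).+1)).
have prefix i n : (i < n)%N -> p i \in [seq p i | i <- iota 0 n].
  by move=> lt_in; rewrite map_f // mem_iota.
have new m n : (m < n)%N -> p n != p m.
  by move=> /prefix lt_mn; have [_ pn _] := pP n; apply: contraNneq pn => ->.
exists p; split.
- by move=> n; have [] := pP n.
- move=> m n e; have [/new|/new|//] := ltngtP m n; by rewrite e eqxx.
- move=> i j k /andP[ij jk]; have [_ _] := pP k; apply; apply: prefix => //.
  exact: ltn_trans jk.
Qed.

End Collinear.

Section ConvexChain.
Variables (R : realType) (X Y : nat -> R).

Definition orient i j k := (X j - X i) * (Y k - Y i) - (Y j - Y i) * (X k - X i).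

Definition slope i j := (Y j - Y i) / (X j - X i).

Lemma slope_mulE i j : X i != X j -> Y j - Y i = slope i j * (X j - X i).
Proof. by move=> Xij; rewrite /slope divfK // subr_eq0 eq_sym. Qed.

Section Triple.
Variables (i j k : nat).
Hypotheses (Xij : X i < X j) (Xjk : X j < X k) (pos : 0 < orient i j k).

Lemma slope_lt_left : slope i j < slope i k.
Proof.
have Xik := lt_trans Xij Xjk.
rewrite /slope ltr_pdivrMr ?subr_gt0 // mulrAC ltr_pdivlMr ?subr_gt0 //.
by rewrite -subr_gt0; move: pos; rewrite /orient; congr (0 < _); ring.
Qed.

Lemma slope_lt_right : slope i k < slope j k.
Proof.
have Xik := lt_trans Xij Xjk.
rewrite /slope ltr_pdivrMr ?subr_gt0 // mulrAC ltr_pdivlMr ?subr_gt0 //.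
by rewrite -subr_gt0; move: pos; rewrite /orient; congr (0 < _); ring.
Qed.

End Triple.

Variable H : set nat.
Hypothesis H_inf : infinite_set H.
Hypothesis X_incr : forall i j, H i -> H j -> (i < j)%N -> X i < X j.
Hypothesis orient_pos :
  forall i j k, H i -> H j -> H k -> (i < j < k)%N -> 0 < orient i j k.

Lemma above_after j k s : H j -> H k -> (j < k)%N ->
  (forall q, H q -> (j < q)%N -> (k <= q)%N) -> s < slope j k ->
  forall q, H q -> (j < q)%N -> s * (X q - X j) < Y q - Y j.
Proof.
move=> Hj Hk jk k_next s_lt q Hq jq; have Xjq := X_incr Hj Hq jq.
have le_slope : slope j k <= slope j q.
  have := k_next q Hq jq; rewrite leq_eqVlt => /orP[/eqP -> //|kq].
  by apply/ltW/slope_lt_left; rewrite ?X_incr ?orient_pos ?jk.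
rewrite (slope_mulE (negbT (lt_eqF Xjq))) ltr_pM2r ?subr_gt0 //.
exact: lt_le_trans le_slope.
Qed.

Lemma above_before i j s : H i -> H j -> (i < j)%N ->
  (forall q, H q -> (q < j)%N -> (q <= i)%N) -> slope i j < s ->
  forall q, H q -> (q < j)%N -> s * (X q - X j) < Y q - Y j.
Proof.
move=> Hi Hj ij i_prev lt_s q Hq qj; have Xqj := X_incr Hq Hj qj.
have le_slope : slope q j <= slope i j.
  have := i_prev q Hq qj; rewrite leq_eqVlt => /orP[/eqP -> //|qi].
  by apply/ltW/slope_lt_right; rewrite ?X_incr ?orient_pos ?qi.
rewrite -opprB -[Y q - Y j]opprB (slope_mulE (negbT (lt_eqF Xqj))) mulrN ltrN2.
by rewrite ltr_pM2r ?subr_gt0 // (le_lt_trans le_slope).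
Qed.

Lemma supporting_line j : H j ->
  exists s, forall q, H q -> q != j -> s * (X q - X j) < Y q - Y j.
Proof.
move=> Hj; have [k [Hk jk] k_min] := exists_next_in j H_inf.
have after := above_after Hj Hk jk k_min.
have [[i [Hi ij]]|no_prev] := pselect (exists i, H i /\ (i < j)%N); last first.
  exists (slope j k - 1) => q Hq; rewrite neq_ltn => /orP[qj|jq].
    by exfalso; apply: no_prev; exists q.
  by apply: after; rewrite // ltrBlDr ltrDl.
have [i0 [Hi0 i0j] i0_max] := exists_prev_in Hi ij.
have before := above_before Hi0 Hj i0j i0_max.
have slopes : slope i0 j < slope j k.
  have Xi0j := X_incr Hi0 Hj i0j; have Xjk := X_incr Hj Hk jk.
  have pos := orient_pos Hi0 Hj Hk (introT andP (conj i0j jk)).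
  exact: lt_trans (slope_lt_left Xi0j Xjk pos) (slope_lt_right Xi0j Xjk pos).
exists ((slope i0 j + slope j k) / 2) => q Hq; rewrite neq_ltn => /orP[qj|jq].
- by apply: before => //; lra.
- by apply: after => //; lra.
Qed.

End ConvexChain.

Lemma sum_fibers (M : nmodType) n K (g : 'I_n -> nat) (a : 'I_n -> M) :
  (forall i, (g i < K)%N) ->
  \sum_(k < K) \sum_(i < n | g i == k) a i = \sum_(i < n) a i.
Proof.
by move=> gK; rewrite [RHS](partition_big (fun i => Ordinal (gK i)) xpredT).
Qed.

Lemma convex_comb_gt0 (R : realType) n (w F : 'I_n -> R) :
  (forall i, 0 <= w i) -> \sum_(i < n) w i = 1 -> (forall i, 0 < F i) ->
  0 < \sum_(i < n) w i * F i.
Proof.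
move=> w_ge0 w_sum F_gt0; have wF_ge0 i : true -> 0 <= w i * F i.
  by move=> _; rewrite mulr_ge0 // ltW.
rewrite lt_def sumr_ge0 ?andbT //.
apply/negP => /eqP/(psumr_eq0P wF_ge0) sum0.
have : \sum_(i < n) w i = 0.
  apply: big1 => i _; have /eqP := sum0 i isT.
  by rewrite mulf_eq0 (gt_eqF (F_gt0 i)) orbF => /eqP.
by rewrite w_sum => /eqP; rewrite oner_eq0.
Qed.

Section FreshPoints.
Variables (R : realType) (V : lmodType R) (p : nat -> V).

Definition fresh k := ~ exists c : nat -> R,
  \sum_(i < k) c i = 1 /\ p k = \sum_(i < k) c i *: p i.

Lemma fresh_affine_indep K (C : nat -> R) :
  (forall k, (k < K)%N -> C k != 0 -> fresh k) ->
  \sum_(k < K) C k = 0 -> \sum_(k < K) C k *: p k = 0 ->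
  forall k, (k < K)%N -> C k = 0.
Proof.
elim: K => [//|K IH] C_fresh; rewrite !big_ord_recr /= => sumC sumCp k.
have [CK0|CK] := eqVneq (C K) 0.
  move: sumC sumCp; rewrite CK0 scale0r !addr0 => sumC sumCp.
  rewrite ltnS leq_eqVlt => /orP[/eqP -> //|kK].
  by apply: IH => // l lK; apply: C_fresh; apply: ltnW.
have sumCK : \sum_(i < K) C i = - C K by apply/eqP; rewrite -addr_eq0 sumC.
have sumCpK : \sum_(i < K) C i *: p i = - (C K *: p K).
  by apply/eqP; rewrite -addr_eq0 sumCp.
exfalso; apply: (C_fresh K (ltnSn K) CK); exists (fun i => - C i / C K); split.
- by rewrite -mulr_suml sumrN sumCK opprK divff.
- rewrite (eq_bigr (fun i : 'I_K => - (C K)^-1 *: (C i *: p i))); last first.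
    by move=> i _; rewrite scalerA mulrC mulNr mulrN.
  by rewrite -scaler_sumr sumCpK scalerN scaleNr opprK scalerA mulVf // scale1r.
Qed.

Lemma conv_image_indices (H : set nat) j : conv (p @` H `\ p j) (p j) ->
  exists n (w : 'I_n -> R) (g : 'I_n -> nat),
    [/\ forall i, 0 <= w i, \sum_(i < n) w i = 1, forall i, H (g i) /\ g i != j
       & p j = \sum_(i < n) w i *: p (g i)].
Proof.
move=> [n [w [q [w_ge0 w_sum qH e]]]].
have /choice[g gP] : forall i, exists k, H k /\ p k = q i.
  by move=> i; have [[k Hk pk] _] := qH i; exists k.
exists n, w, g; split => // [i|].
- have [Hg pg] := gP i; split => //; apply/eqP => gij.
  by apply: (proj2 (qH i)); rewrite /= -pg gij.
- by rewrite e; apply: eq_bigr => i _; have [_ ->] := gP i.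
Qed.

Lemma conv_indep_fresh : conv_indep (p @` [set k | fresh k]).
Proof.
move=> _ [j fresh_j <-] /conv_image_indices[n [w [g [w_ge0 w_sum gP e]]]].
have gj i : g i != j by have [] := gP i.
pose K := (maxn j (\max_(i < n) g i)).+1.
have gK i : (g i < K)%N by rewrite ltnS (leq_trans (leq_bigmax i)) ?leq_maxr.
have jK : (j < K)%N by rewrite ltnS leq_maxl.
pose C k := \sum_(i < n | g i == k) w i - (if k == j then 1 else 0).
suff : C j = 0.
  rewrite /C big1 => [/eqP|i /eqP gij]; first by rewrite eqxx sub0r oppr_eq0 oner_eq0.
  by move: (gj i); rewrite gij eqxx.
apply: (@fresh_affine_indep K) => //.
- move=> k kK; rewrite /C; have [-> //|kj] := eqVneq k j.
  rewrite subr0; have [[i /eqP <-] _|no_i] := pselect (exists i, g i == k).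
    by have [] := gP i.
  by rewrite big1 ?eqxx // => i gik; exfalso; apply: no_i; exists i.
- by rewrite sumrB sum_fibers // -big_mkcond (big_ord1_eq _ (fun=> 1)) jK w_sum subrr.
- rewrite (eq_bigr (fun k : 'I_K => \sum_(i < n | g i == k) w i *: p (g i) -
      (if (k : nat) == j then p k else 0))); last first.
    move=> k _; rewrite scalerBl scaler_suml; congr (_ - _).
      by apply: eq_bigr => i /eqP <-.
    by case: eqP => _; rewrite ?scale1r ?scale0r.
  by rewrite sumrB sum_fibers // -big_mkcond big_ord1_eq jK e subrr.
Qed.

(* F respects every affine relation among the p_i, as an affine function of
   the points would. *)
Definition affine_along (F : nat -> R) := forall j n (w : 'I_n -> R) (g : 'I_n -> nat),
  \sum_(i < n) w i = 1 -> p j = \sum_(i < n) w i *: p (g i) ->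
  F j = \sum_(i < n) w i * F (g i).

Lemma affine_along_comb (F G K : nat -> R) (a b c : R) :
  affine_along F -> affine_along G -> (forall m, K m = a * F m + b * G m + c) ->
  affine_along K.
Proof.
move=> F_aff G_aff KE j n w g w_sum e.
rewrite KE (F_aff _ _ _ _ w_sum e) (G_aff _ _ _ _ w_sum e).
rewrite [RHS](eq_bigr (fun i => a * (w i * F (g i)) + b * (w i * G (g i)) + c * w i)).
  by rewrite !big_split -!mulr_sumr w_sum mulr1.
by move=> i _; rewrite KE; ring.
Qed.

Lemma conv_indep_separated (H : set nat) :
  (forall j, H j -> exists2 F, affine_along F &
     F j = 0 /\ forall q, H q -> q != j -> 0 < F q) ->
  conv_indep (p @` H).
Proof.
move=> sep _ [j Hj <-] /conv_image_indices[n [w [g [w_ge0 w_sum gP e]]]].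
have [F F_aff [Fj F_gt0]] := sep j Hj.
have := convex_comb_gt0 w_ge0 w_sum (fun i => F_gt0 _ (proj1 (gP i)) (proj2 (gP i))).
by rewrite -(F_aff j n w g w_sum e) Fj ltxx.
Qed.

End FreshPoints.

Section FiniteRank.
Variables (R : realType) (V : lmodType R) (p : nat -> V) (N : nat).

Definition affine_coords (v : V) (C : nat -> R) :=
  [/\ forall k, C k != 0 -> fresh p k, \sum_(k < N) C k = 1 &
      v = \sum_(k < N) C k *: p k].

Lemma affine_coords_unique v C D : affine_coords v C -> affine_coords v D ->
  forall k, (k < N)%N -> C k = D k.
Proof.
move=> [C_fresh C_sum vC] [D_fresh D_sum vD] k kN; apply/eqP; rewrite -subr_eq0.
apply/eqP/(@fresh_affine_indep _ _ _ N (fun k => C k - D k)) => //.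
- move=> l _; have [Cl|Cl _] := eqVneq (C l) 0; last exact: C_fresh.
  by rewrite Cl sub0r oppr_eq0; apply: D_fresh.
- by rewrite sumrB C_sum D_sum subrr.
- rewrite (eq_bigr (fun k : 'I_N => C k *: p k - D k *: p k)) => [|l _].
    by rewrite sumrB -vC -vD subrr.
  by rewrite scalerBl.
Qed.

Lemma affine_coords_comb n (q : 'I_n -> V) (D : 'I_n -> nat -> R) (w : 'I_n -> R) :
  (forall i, affine_coords (q i) (D i)) -> \sum_(i < n) w i = 1 ->
  affine_coords (\sum_(i < n) w i *: q i) (fun k => \sum_(i < n) w i * D i k).
Proof.
move=> qD w_sum; split.
- move=> k; have [[i Dik] _|no_i] := pselect (exists i, D i k != 0).
    by have [D_fresh _ _] := qD i; apply: D_fresh.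
  rewrite big1 ?eqxx // => i _; have [->|Dik] := eqVneq (D i k) 0; first by rewrite mulr0.
  by exfalso; apply: no_i; exists i.
- rewrite exchange_big /= -w_sum; apply: eq_bigr => i _.
  by have [_ D_sum _] := qD i; rewrite -mulr_sumr D_sum mulr1.
- rewrite (eq_bigr (fun k : 'I_N => \sum_(i < n) w i *: (D i k *: p k))) => [|k _].
    rewrite exchange_big /=; apply: eq_bigr => i _.
    by have [_ _ ->] := qD i; rewrite scaler_sumr.
  by rewrite scaler_suml; apply: eq_bigr => i _; rewrite scalerA.
Qed.

Lemma affine_coords_exist :
  (forall k, fresh p k -> (k < N)%N) -> forall m, exists C, affine_coords (p m) C.
Proof.
move=> fresh_lt; elim/ltn_ind => m IH; have [fresh_m|] := pselect (fresh p m).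
  exists (fun k => if k == m then 1 else 0); split.
  - by move=> k; have [-> //|km] := eqVneq k m; rewrite eqxx.
  - by rewrite -big_mkcond (big_ord1_eq _ (fun=> 1)) fresh_lt.
  - rewrite (eq_bigr (fun k : 'I_N => if (k : nat) == m then p k else 0)) => [|k _].
      by rewrite -big_mkcond big_ord1_eq fresh_lt.
    by case: eqP; rewrite ?scale1r ?scale0r.
move=> /contrapT[c [c_sum ->]].
have /choice[D qD] : forall i : 'I_m, exists C, affine_coords (p i) C by move=> i; apply: IH.
by exists (fun k => \sum_(i < m) c i * D i k); apply: affine_coords_comb.
Qed.

Variable lam : nat -> nat -> R.
Hypothesis lamP : forall m, affine_coords (p m) (lam m).

Lemma affine_along_coord k : (k < N)%N -> affine_along p (fun m => lam m k).
Proof.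
move=> kN j n w g w_sum pj.
have := affine_coords_comb (fun i => lamP (g i)) w_sum; rewrite -pj.
by move=> /(affine_coords_unique (lamP j)); apply.
Qed.

Lemma sub_coords i j : p j - p i = \sum_(k < N) (lam j k - lam i k) *: p k.
Proof.
have [_ _ {1}->] := lamP j; have [_ _ {1}->] := lamP i.
by rewrite -sumrB; apply: eq_bigr => k _; rewrite scalerBl.
Qed.

Definition minor i j k (u v : 'I_N) :=
  (lam j u - lam i u) * (lam k v - lam i v) - (lam j v - lam i v) * (lam k u - lam i u).

Hypothesis p_inj : injective p.
Hypothesis no_three : forall i j k, (i < j < k)%N -> ~ on_line (p i) (p j) (p k).

Lemma minor_neq0 i j k : (i < j < k)%N -> exists u v, minor i j k u v != 0.
Proof.
move=> ijk; apply: contrapT => all0.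
have minor0 u v : minor i j k u v = 0.
  by apply/eqP; apply: contrapT => /negP nz; apply: all0; exists u, v.
have [[u uij]|] := pselect (exists u : 'I_N, lam j u - lam i u != 0).
  apply: (no_three ijk); exists ((lam k u - lam i u) / (lam j u - lam i u)).
  apply/eqP; rewrite addrC -subr_eq sub_coords sub_coords scaler_sumr; apply/eqP.
  apply: eq_bigr => l _; rewrite scalerA; congr (_ *: _).
  have /eqP := minor0 u l; rewrite /minor subr_eq0 => /eqP e.
  by apply: (mulfI uij); rewrite mulrA mulrCA mulfV // mulr1 e mulrC.
move=> no_u; move: ijk => /andP[+ _]; rewrite ltn_neqAle => /andP[/eqP ij _].
apply/ij/esym/p_inj/eqP; rewrite -subr_eq0 sub_coords big1 // => l _.
have /eqP -> : lam j l - lam i l == 0.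
  by apply: contrapT => /negP nz; apply: no_u; exists l.
by rewrite scale0r.
Qed.

Definition sign (x : R) := (0 < x, x < 0).

Definition sign_val (b : bool * bool) : R := if b.1 then 1 else -1.

Lemma sign_eq00 x : (sign x == (false, false)) = (x == 0).
Proof. by rewrite /sign; case: ltgtP. Qed.

Lemma sign_val_gt0 x : x != 0 -> 0 < sign_val (sign x) * x.
Proof.
rewrite /sign_val /sign; case: (ltgtP x 0) => [x_lt0|x_gt0|->] _ //=.
  by rewrite mulN1r oppr_gt0.
by rewrite mul1r.
Qed.

Lemma sign_val_sqr b : sign_val b * sign_val b = 1.
Proof. by rewrite /sign_val; case: ifP; rewrite ?mulr1 ?mulrNN ?mulr1. Qed.

Lemma ramsey_coords : exists H (u v : 'I_N) (sX sM : R),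
  [/\ infinite_set H, sX * sX = 1,
      forall i j, H i -> H j -> (i < j)%N -> 0 < sX * (lam j u - lam i u) &
      forall i j k, H i -> H j -> H k -> (i < j < k)%N -> 0 < sM * minor i j k u v].
Proof.
pose colour i j k := ([ffun u : 'I_N => sign (lam j u - lam i u)],
  [ffun uv : 'I_N * 'I_N => sign (minor i j k uv.1 uv.2)]).
have [H [[cX cM] [Hinf Hc]]] := ramsey_triples colour.
have [i0 _ Hi0] := infinite_nat_unbounded Hinf 0.
have [j0 ij0 Hj0] := infinite_nat_unbounded Hinf i0.+1.
have [k0 jk0 Hk0] := infinite_nat_unbounded Hinf j0.+1.
have ijk0 : (i0 < j0 < k0)%N by rewrite ij0.
have [u [v uv0]] := minor_neq0 ijk0.
have cXE i j : H i -> H j -> (i < j)%N -> cX u = sign (lam j u - lam i u).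
  move=> Hi Hj ij; have [k jk Hk] := infinite_nat_unbounded Hinf j.+1.
  by have [<- _] := Hc i j k Hi Hj Hk (introT andP (conj ij jk)); rewrite ffunE.
have cME i j k : H i -> H j -> H k -> (i < j < k)%N -> cM (u, v) = sign (minor i j k u v).
  by move=> Hi Hj Hk ijk; have [_ <-] := Hc i j k Hi Hj Hk ijk; rewrite ffunE.
have cX_neq00 : cX u != (false, false).
  apply: contra uv0 => /eqP cX0; rewrite /minor.
  have lamE j : H j -> (i0 < j)%N -> lam j u = lam i0 u.
    by move=> Hj ij; apply/eqP; rewrite -subr_eq0 -sign_eq00 -(cXE i0) ?cX0.
  rewrite lamE ?lamE ?subrr ?mul0r ?mulr0 ?subrr //; exact: ltn_trans jk0.
exists H, u, v, (sign_val (cX u)), (sign_val (cM (u, v))); split => //.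
- exact: sign_val_sqr.
- move=> i j Hi Hj ij; rewrite (cXE i j) //; apply: sign_val_gt0.
  by rewrite -sign_eq00 -(cXE i j).
- move=> i j k Hi Hj Hk ijk; rewrite (cME i j k) //; apply: sign_val_gt0.
  by rewrite -sign_eq00 -(cME i j k) // (cME i0 j0 k0) // sign_eq00.
Qed.

Lemma convex_chain_coords : exists H (X Y : nat -> R),
  [/\ infinite_set H, affine_along p X, affine_along p Y,
      forall i j, H i -> H j -> (i < j)%N -> X i < X j &
      forall i j k, H i -> H j -> H k -> (i < j < k)%N -> 0 < orient X Y i j k].
Proof.
have [H [u [v [sX [sM [Hinf sX2 X_incr pos]]]]]] := ramsey_coords.
have coord_aff := affine_along_coord (ltn_ord _).
exists H, (fun m => sX * lam m u), (fun m => sX * sM * lam m v); split => //.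
- apply: (affine_along_comb (a := sX) (b := 0) (c := 0) (coord_aff u) (coord_aff v)).
  by move=> m /=; ring.
- apply: (affine_along_comb (a := 0) (b := sX * sM) (c := 0) (coord_aff u) (coord_aff v)).
  by move=> m /=; ring.
- by move=> i j Hi Hj ij; rewrite -subr_gt0 -mulrBr X_incr.
- move=> i j k Hi Hj Hk ijk; rewrite (_ : orient _ _ i j k = sX * sX * (sM * minor i j k u v)).
    by rewrite sX2 mul1r pos.
  by rewrite /orient /minor /=; ring.
Qed.

Lemma conv_indep_finite_rank : exists H, infinite_set H /\ conv_indep (p @` H).
Proof.
have [H [X [Y [Hinf X_aff Y_aff X_incr pos]]]] := convex_chain_coords.
exists H; split => //; apply: conv_indep_separated => j Hj.
have [s sP] := supporting_line Hinf X_incr pos Hj.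
exists (fun m => Y m - Y j - s * (X m - X j)).
  apply: (affine_along_comb (a := 1) (b := - s) (c := s * X j - Y j) Y_aff X_aff).
  by move=> m /=; ring.
by split=> [|q Hq qj]; rewrite ?subrr ?mulr0 ?subr0 // subr_gt0 sP.
Qed.

End FiniteRank.

Theorem corollary5p3 (R : realType) (V : lmodType R) (X : set V) :
  (forall n : nat, exists s : seq V,
      [/\ uniq s, (n <= size s)%N, [set` s] `<=` X & conv_indep [set` s]]) ->
  exists Y : set V, [/\ Y `<=` X, infinite_set Y & conv_indep Y].
Proof.
move=> large; have [p [pX p_inj no_three]] := general_position_seq large.
have image_sub (A : set nat) : p @` A `<=` X by move=> _ [k _ <-].
have [fresh_inf|fresh_fin] := pselect (infinite_set [set k | fresh p k]).
  exists (p @` [set k | fresh p k]); split => //; last exact: conv_indep_fresh.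
  exact: infinite_image_inj.
have [N fresh_lt] := finite_nat_bounded (contrapT fresh_fin).
have /choice[lam lamP] := affine_coords_exist fresh_lt.
have [H [Hinf Hind]] := conv_indep_finite_rank lamP p_inj no_three.
by exists (p @` H); split => //; apply: infinite_image_inj.
Qed.
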